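(* Let $\mathcal{X}$ be a Hilbert module over a pro-$C^*$-algebra $\mathcal{A}$, let $K\in Hom^*_{\mathcal{A}}(\mathcal{X})$, and let $\{\xi_i\}_{i\in I}$ and $\{\eta_i\}_{i\in I}$ be Parseval $K$-frames for $\mathcal{X}$ with synthesis operators $L_1,L_2:\mathcal{H}_{\mathcal{A}}\to\mathcal{X}$ (so $L_1e_i=\xi_i$, $L_2e_i=\eta_i$ for the standard orthonormal basis $\{e_i\}$ of $\mathcal{H}_{\mathcal{A}}$). If $L_1L_2^*=0$, then $\{\xi_i+\eta_i\}_{i\in I}$ is a $2$-tight $K$-frame for $\mathcal{X}$, i.e. $\sum_{i\in I}\langle\xi,\xi_i+\eta_i\rangle\langle\xi_i+\eta_i,\xi\rangle=2\langle K^*\xi,K^*\xi\rangle$ for all $\xi\in\mathcal{X}$.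
   Context: A pro-$C^*$-algebra $\mathcal{A}$ is a complete Hausdorff topological $*$-algebra whose topology is given by its continuous $C^*$-seminorms. A Hilbert $\mathcal{A}$-module $\mathcal{X}$ is a left $\mathcal{A}$-module with a complete $\mathcal{A}$-valued inner product. $Hom^*_{\mathcal{A}}(\mathcal{X})$ denotes adjointable bounded $\mathcal{A}$-module maps. $\mathcal{H}_{\mathcal{A}}$ is the Hilbert $\mathcal{A}$-module of sequences $(a_i)$ in $\mathcal{A}$ with $\sum_i a_i^*a_i$ convergent, inner product $\langle (a_i),(b_i)\rangle=\sum_ia_ib_i^*$; $e_i$ has $1_{\mathcal{A}}$ in position $i$, $0$ elsewhere; the synthesis operator of $\{\xi_i\}$ is $(c_i)\mapsto\sum_ic_i\xi_i$. A sequence $\{\xi_i\}_{i\in I}$ ($I$ countable) is a Parseval $K$-frame if $\sum_i\langle\xi,\xi_i\rangle\langle\xi_i,\xi\rangle=\langle K^*\xi,K^*\xi\rangle$ for all $\xi\in\mathcal{X}$ (series convergent in $\mathcal{A}$); it is $A$-tight if $\sum_i\langle\xi,\xi_i\rangle\langle\xi_i,\xi\rangle=A\langle K^*\xi,K^*\xi\rangle$ for all $\xi$. *)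

From HB Require Import structures.
From mathcomp Require Import all_boot all_order all_algebra.
From mathcomp Require Import complex.
From mathcomp Require Import reals.
Set Implicit Arguments. Unset Strict Implicit. Unset Printing Implicit Defensive.
Import Order.TTheory GRing.Theory Num.Theory.
Local Open Scope ring_scope.

(* [q] is a family of nonnegative functionals on a zmodule T ("seminorms" of the topology). *)
Definition directed (D : Type) (le : D -> D -> Prop) : Prop :=
  inhabited D /\ (forall d, le d d) /\
  (forall d1 d2 d3, le d1 d2 -> le d2 d3 -> le d1 d3) /\
  (forall d1 d2, exists d3, le d1 d3 /\ le d2 d3).

Definition net_cauchy (R : realType) (T : zmodType) (q : (T -> R) -> Prop)
  (D : Type) (le : D -> D -> Prop) (u : D -> T) : Prop :=
  forall p, q p -> forall e : R, 0 < e ->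
    exists d0, forall d1 d2, le d0 d1 -> le d0 d2 -> p (u d1 - u d2) < e.

Definition net_converges (R : realType) (T : zmodType) (q : (T -> R) -> Prop)
  (D : Type) (le : D -> D -> Prop) (u : D -> T) (t : T) : Prop :=
  forall p, q p -> forall e : R, 0 < e ->
    exists d0, forall d, le d0 d -> p (u d - t) < e.

Definition complete_wrt (R : realType) (T : zmodType) (q : (T -> R) -> Prop) : Prop :=
  forall (D : Type) (le : D -> D -> Prop) (u : D -> T),
    directed le -> net_cauchy q le u -> exists t, net_converges q le u t.

Definition series_converges (R : realType) (T : zmodType) (q : (T -> R) -> Prop)
  (u : nat -> T) (s : T) : Prop :=
  forall p, q p -> forall e : R, 0 < e ->
    exists N, forall n, (N <= n)%N -> p (\sum_(i < n) u i - s) < e.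

Record is_C_star_seminorm (R : realType) (A : algType R[i]) (star : A -> A) (p : A -> R) : Prop := {
  csn_ge0 : forall a, 0 <= p a;
  csn_triangle : forall a b, p (a + b) <= p a + p b;
  csn_homog : forall (c : R[i]) a, p (c *: a) = Normc.normc c * p a;
  csn_submult : forall a b, p (a * b) <= p a * p b;
  csn_cstar : forall a, p (star a * a) = p a ^+ 2
}.

Record is_pro_C_star_algebra (R : realType) (A : algType R[i]) (star : A -> A)
    (S : (A -> R) -> Prop) : Prop := {
  star_add : forall a b, star (a + b) = star a + star b;
  star_scale : forall (c : R[i]) a, star (c *: a) = (conjc c) *: star a;
  star_mul : forall a b, star (a * b) = star b * star a;
  star_invol : forall a, star (star a) = a;
  seminorms_cstar : forall p, S p -> is_C_star_seminorm star p;
  pro_hausdorff : forall a, (forall p, S p -> p a = 0) -> a = 0;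
  pro_complete : complete_wrt S
}.

Definition hm_seminorms (R : realType) (A : algType R[i]) (X : lmodType A)
  (S : (A -> R) -> Prop) (ip : X -> X -> A) : (X -> R) -> Prop :=
  fun q => exists2 p, S p & q = (fun x => Num.sqrt (p (ip x x))).

Record is_hilbert_module (R : realType) (A : algType R[i]) (star : A -> A)
    (S : (A -> R) -> Prop) (X : lmodType A) (ip : X -> X -> A) : Prop := {
  ip_linear : forall (a : A) (x y z : X), ip (a *: x + y) z = a * ip x z + ip y z;
  ip_star : forall x y, ip y x = star (ip x y);
  ip_pos : forall x, exists b : A, ip x x = star b * b;
  ip_definite : forall x, ip x x = 0 -> x = 0;
  hm_complete : complete_wrt (hm_seminorms S ip)
}.

Definition is_adjointable_hom (R : realType) (A : algType R[i])
    (S : (A -> R) -> Prop) (X : lmodType A) (ip : X -> X -> A)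
    (K Kstar : X -> X) : Prop :=
  (forall (a : A) x y, K (a *: x + y) = a *: K x + K y) /\
  (forall p, S p -> exists M : R, forall x, p (ip (K x) (K x)) <= M * p (ip x x)) /\
  (forall x y, ip (K x) y = ip x (Kstar y)).

Definition in_HA (R : realType) (A : algType R[i]) (star : A -> A)
    (S : (A -> R) -> Prop) (c : nat -> A) : Prop :=
  exists s, series_converges S (fun i => star (c i) * c i) s.

Definition std_e (R : realType) (A : algType R[i]) (i : nat) : nat -> A :=
  fun j => if j == i then 1 else 0.

Definition is_synthesis_op (R : realType) (A : algType R[i]) (star : A -> A)
    (S : (A -> R) -> Prop) (X : lmodType A) (ip : X -> X -> A)
    (xi : nat -> X) (L : (nat -> A) -> X) : Prop :=
  forall c, in_HA star S c ->
    series_converges (hm_seminorms S ip) (fun i => c i *: xi i) (L c).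

(* Lstar : X -> H_A is the adjoint of L : H_A -> X, for the inner product
   <(a_i),(b_i)> = \sum_i a_i b_i^* on H_A *)
Definition is_adjoint_HA (R : realType) (A : algType R[i]) (star : A -> A)
    (S : (A -> R) -> Prop) (X : lmodType A) (ip : X -> X -> A)
    (L : (nat -> A) -> X) (Lstar : X -> nat -> A) : Prop :=
  forall x, in_HA star S (Lstar x) /\
  forall c, in_HA star S c ->
    series_converges S (fun i => c i * star (Lstar x i)) (ip (L c) x).

Definition is_tight_K_frame (R : realType) (A : algType R[i])
    (S : (A -> R) -> Prop) (X : lmodType A) (ip : X -> X -> A)
    (Kstar : X -> X) (alpha : A) (xi : nat -> X) : Prop :=
  forall x, series_converges S (fun i => ip x (xi i) * ip (xi i) x)
                              (alpha * ip (Kstar x) (Kstar x)).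

Definition is_Parseval_K_frame (R : realType) (A : algType R[i])
    (S : (A -> R) -> Prop) (X : lmodType A) (ip : X -> X -> A)
    (Kstar : X -> X) (xi : nat -> X) : Prop :=
  forall x, series_converges S (fun i => ip x (xi i) * ip (xi i) x)
                              (ip (Kstar x) (Kstar x)).

(* Testing [L1 c, x] against the standard basis identifies the analysis operator:
   L1^* x = (<x, xi_i>)_i and likewise for L2.  Hence <L1 L2^* x, x> is the sum of the
   cross terms <x, eta_i><xi_i, x>, which vanishes because L1 L2^* = 0; so do the
   adjoint cross terms.  Expanding <x, xi_i + eta_i><xi_i + eta_i, x> leaves the two
   Parseval sums, each equal to <K^* x, K^* x>. *)
From HB Require Import structures.
From mathcomp Require Import all_boot all_order all_algebra.
From mathcomp Require Import complex.
From mathcomp Require Import reals.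
Import Order.TTheory GRing.Theory Num.Theory.
Local Open Scope ring_scope.

Set Implicit Arguments.
Unset Strict Implicit.

Lemma sum_ord_single (V : nmodType) (g : nat -> V) i n :
  (i < n)%N -> (forall j, j != i -> g j = 0) -> \sum_(j < n) g j = g i.
Proof.
move=> lt_in g0; rewrite (bigID (fun j : 'I_n => val j == i)) /= big_ord1_eq lt_in.
by rewrite big1 ?addr0 // => j /g0.
Qed.

Section ProCStarSeries.
Variables (R : realType) (A : algType R[i]) (star : A -> A) (S : (A -> R) -> Prop).
Hypothesis hA : is_pro_C_star_algebra star S.

Lemma star0 : star 0 = 0.
Proof.
have := star_add hA 0 0; rewrite addr0 => h.
by apply: (addIr (star 0)); rewrite add0r -h.
Qed.

Lemma starN a : star (- a) = - star a.
Proof. by apply/eqP; rewrite -subr_eq0 opprK -(star_add hA) addNr star0. Qed.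

Lemma star_sum n (u : nat -> A) : star (\sum_(i < n) u i) = \sum_(i < n) star (u i).
Proof.
elim: n => [|n IH]; first by rewrite !big_ord0 star0.
by rewrite !big_ord_recr /= (star_add hA) IH.
Qed.

Section Seminorm.
Variable p : A -> R.
Hypothesis Sp : S p.

Let hp := seminorms_cstar hA Sp.

Lemma seminorm0 : p 0 = 0.
Proof. by have := csn_homog hp 0 0; rewrite scale0r Normc.normc0 mul0r. Qed.

Lemma seminormN a : p (- a) = p a.
Proof.
rewrite -scaleN1r (csn_homog hp) /Normc.normc /=.
by rewrite oppr0 expr0n addr0 sqrrN expr1n sqrtr1 mul1r.
Qed.

Lemma seminorm_star_le a : p (star a) <= p a.
Proof.
have := csn_submult hp a (star a).
rewrite -{1}(star_invol hA a) (csn_cstar hp) expr2.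
have [->|nz] := eqVneq (p (star a)) 0; first by rewrite (csn_ge0 hp).
by rewrite ler_pM2r // lt_def nz (csn_ge0 hp).
Qed.

End Seminorm.

Lemma series_converges_eq (u v : nat -> A) s t :
  series_converges S u s -> u =1 v -> s = t -> series_converges S v t.
Proof.
move=> hu uv <- p Sp e e_gt0; have [N hN] := hu p Sp e e_gt0; exists N => n le_Nn.
under eq_bigr do rewrite -uv.
exact: hN.
Qed.

Lemma series_convergesD (u v : nat -> A) s t :
  series_converges S u s -> series_converges S v t ->
  series_converges S (fun i => u i + v i) (s + t).
Proof.
move=> hu hv p Sp e e_gt0.
have e2_gt0 : 0 < e / 2 by rewrite divr_gt0.
have [N1 h1] := hu p Sp _ e2_gt0; have [N2 h2] := hv p Sp _ e2_gt0.
exists (maxn N1 N2) => n; rewrite geq_max => /andP[le_N1n le_N2n].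
rewrite big_split /= opprD addrACA.
apply: le_lt_trans (csn_triangle (seminorms_cstar hA Sp) _ _) _.
by rewrite (splitr e) ltrD ?h1 ?h2.
Qed.

Lemma series_converges_star (u : nat -> A) s :
  series_converges S u s -> series_converges S (fun i => star (u i)) (star s).
Proof.
move=> hu p Sp e e_gt0; have [N hN] := hu p Sp e e_gt0; exists N => n le_Nn.
rewrite -star_sum -starN -(star_add hA).
exact: le_lt_trans (seminorm_star_le Sp _) (hN n le_Nn).
Qed.

Lemma series_converges_unique (u : nat -> A) s t :
  series_converges S u s -> series_converges S u t -> s = t.
Proof.
move=> hs ht; apply/eqP; rewrite -subr_eq0; apply/eqP.
apply: (pro_hausdorff hA) => p Sp; have hp := seminorms_cstar hA Sp.
apply/le_anti; rewrite (csn_ge0 hp) andbT leNgt; apply/negP => pst_gt0.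
have e2_gt0 : 0 < p (s - t) / 2 by rewrite divr_gt0.
have [N1 h1] := hs p Sp _ e2_gt0; have [N2 h2] := ht p Sp _ e2_gt0.
pose n := maxn N1 N2.
have tri : p (s - t) <= p (\sum_(i < n) u i - s) + p (\sum_(i < n) u i - t).
  rewrite -(seminormN Sp (_ - s)); apply: le_trans (csn_triangle hp _ _).
  by rewrite opprB addrA subrK.
have small : p (\sum_(i < n) u i - s) + p (\sum_(i < n) u i - t) < p (s - t).
  by rewrite [ltRHS]splitr ltrD ?h1 ?h2 ?leq_maxl ?leq_maxr.
by have := le_lt_trans tri small; rewrite ltxx.
Qed.

Lemma series_converges_single (u : nat -> A) i :
  (forall j, j != i -> u j = 0) -> series_converges S u (u i).
Proof.
move=> u0 p Sp e e_gt0; exists i.+1 => n lt_in.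
by rewrite (@sum_ord_single _ u i n) ?subrr ?seminorm0.
Qed.

Lemma std_e_in_HA i : in_HA star S (std_e A i).
Proof.
exists (star (std_e A i i) * std_e A i i); apply: series_converges_single => j ne_ji.
by rewrite /std_e (negbTE ne_ji) mulr0.
Qed.

End ProCStarSeries.

Section HilbertModule.
Variables (R : realType) (A : algType R[i]) (star : A -> A) (S : (A -> R) -> Prop).
Variables (X : lmodType A) (ip : X -> X -> A).
Hypotheses (hA : is_pro_C_star_algebra star S) (hX : is_hilbert_module star S ip).

Lemma ipDl x y z : ip (x + y) z = ip x z + ip y z.
Proof. by have := ip_linear hX 1 x y z; rewrite scale1r mul1r. Qed.

Lemma ipDr x y z : ip z (x + y) = ip z x + ip z y.
Proof. by rewrite !(ip_star hX _ z) ipDl (star_add hA). Qed.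

Lemma ip0l z : ip 0 z = 0.
Proof. by apply: (addIr (ip 0 z)); rewrite add0r -ipDl addr0. Qed.

Lemma adjoint_HA_std_e (L : (nat -> A) -> X) Lstar x i :
  is_adjoint_HA star S ip L Lstar -> star (Lstar x i) = ip (L (std_e A i)) x.
Proof.
move=> /(_ x) [_ /(_ _ (std_e_in_HA hA i)) hL].
have single : series_converges S (fun j => std_e A i j * star (Lstar x j)) (star (Lstar x i)).
  have := @series_converges_single _ _ _ _ hA (fun j => std_e A i j * star (Lstar x j)) i.
  by rewrite /std_e eqxx mul1r; apply=> j /negbTE ->; rewrite mul0r.
by have := series_converges_unique hA single hL.
Qed.

Lemma series_converges_cross_terms (xi eta : nat -> X) (L1 L2 : (nat -> A) -> X)
    L1star L2star x :
  is_adjoint_HA star S ip L1 L1star -> is_adjoint_HA star S ip L2 L2star ->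
  (forall i, L1 (std_e A i) = xi i) -> (forall i, L2 (std_e A i) = eta i) ->
  series_converges S (fun i => ip x (eta i) * ip (xi i) x) (ip (L1 (L2star x)) x).
Proof.
move=> adj1 adj2 L1e L2e; have [_ /(_ _ (proj1 (adj2 x))) hL] := adj1 x.
apply: (series_converges_eq hL) => // i.
rewrite (adjoint_HA_std_e _ _ adj1) L1e -(star_invol hA (L2star x i)).
by rewrite (adjoint_HA_std_e _ _ adj2) L2e -(ip_star hX).
Qed.

Lemma series_converges_frame_sum (xi eta : nat -> X) x a b c :
  series_converges S (fun i => ip x (xi i) * ip (xi i) x) a ->
  series_converges S (fun i => ip x (eta i) * ip (eta i) x) b ->
  series_converges S (fun i => ip x (eta i) * ip (xi i) x) c ->
  series_converges S (fun i => ip x (xi i + eta i) * ip (xi i + eta i) x)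
    (a + star c + c + b).
Proof.
move=> ha hb hc; have hc' := series_converges_star hA hc.
apply: (series_converges_eq (series_convergesD hA (series_convergesD hA
  (series_convergesD hA ha hc') hc) hb)) => // i.
rewrite (star_mul hA) -!(ip_star hX) ipDr ipDl.
by rewrite !mulrDl !mulrDr !addrA.
Qed.

End HilbertModule.

Unset Implicit Arguments.
Set Strict Implicit.

Theorem theorem5p5 (R : realType) (A : algType R[i]) (star : A -> A)
  (S : (A -> R) -> Prop) (X : lmodType A) (ip : X -> X -> A)
  (K Kstar : X -> X) (xi eta : nat -> X)
  (L1 L2 : (nat -> A) -> X) (L1star L2star : X -> nat -> A) :
  is_pro_C_star_algebra star S ->
  is_hilbert_module star S ip ->
  is_adjointable_hom S ip K Kstar ->
  is_Parseval_K_frame S ip Kstar xi ->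
  is_Parseval_K_frame S ip Kstar eta ->
  is_synthesis_op star S ip xi L1 ->
  is_synthesis_op star S ip eta L2 ->
  is_adjoint_HA star S ip L1 L1star ->
  is_adjoint_HA star S ip L2 L2star ->
  (forall i, L1 (std_e A i) = xi i) ->
  (forall i, L2 (std_e A i) = eta i) ->
  (forall x, L1 (L2star x) = 0) ->
  is_tight_K_frame S ip Kstar 2 (fun i => xi i + eta i).
Proof.
move=> hA hX _ Fxi Feta _ _ adj1 adj2 L1e L2e L12 x.
have cross := series_converges_cross_terms hA hX x adj1 adj2 L1e L2e.
rewrite L12 (ip0l hX) in cross.
apply: (series_converges_eq (series_converges_frame_sum hA hX (Fxi x) (Feta x) cross)) => [//|].
by rewrite (star0 hA) !addr0 mulr2n mulrDl mul1r.
Qed.
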